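(* Let $n\ge5$. There is a reciprocal recommendation task with $n$ users such that, for every $\alpha<1$ and every maximizer $u^\alpha$ of $W_\alpha$ over $\mathcal U$, and for every choice of $u^{\mathrm{eq},\beta}\in\mathcal U^{\mathrm{eq}}_\beta$ ($\beta>0$): (i) there exists $\beta>0$ such that $u^\alpha_i>u^{\mathrm{eq},\beta}_i$ for all $i\in[n]$; (ii) $\lim_{\beta\to\infty}\sum_{i=1}^n u^{\mathrm{eq},\beta}_i=0$.
   Context: Reciprocal recommendation task: $n$ users $[n]$ who are also the items, a symmetric matrix of mutual preference values $\mu_{ij}=\mu_{ji}\ge0$ ($i\neq j$), and exposure weights $v\in\mathbb R^{n-1}$ with $v_1\ge\dots\ge v_{n-1}\ge0$. Each user $i$ receives a stochastic ranking of the other users: a ranking tensor is $P=(P_{ijk})$, $i\in[n]$, $j\in[n]\setminus\{i\}$, $k\in[n-1]$, such that each $(P_{ijk})_{j,k}$ is doubly stochastic; $\mathcal P$ is the set of ranking tensors; $P_{ij}v=\sum_kP_{ijk}v_k$. The (two-sided) utility of user $i$ is $u_i(P)=\sum_{j\ne i}\mu_{ij}P_{ij}v+\sum_{j\neq i}\mu_{ij}P_{ji}v$; $\mathcal U=\{(u_i(P))_{i\in[n]}:P\in\mathcal P\}$. Welfare: $\psi(x,\alpha)=x^\alpha$ ($\alpha>0$), $\log x$ ($\alpha=0$), $-x^\alpha$ ($\alpha<0$), with $\psi(0,\alpha)=-\infty$ for $\alpha\le0$; $W_\alpha(u)=\sum_{i=1}^n\psi(u_i,\alpha)$. Equality of utility: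 $D(u)=\frac1n\sum_{j=1}^n\big(u_j-\frac1n\sum_{j'=1}^nu_{j'}\big)^2$, $F^{\mathrm{eq}}_\beta(u)=\sum_{i=1}^nu_i-\beta\sqrt{D(u)}$, $\mathcal U^{\mathrm{eq}}_\beta=\arg\max_{u\in\mathcal U}F^{\mathrm{eq}}_\beta(u)$. *)

From HB Require Import structures.
From mathcomp Require Import all_boot all_order all_algebra.
From mathcomp Require Import all_classical all_reals all_analysis.
Set Implicit Arguments. Unset Strict Implicit. Unset Printing Implicit Defensive.
Import Order.TTheory GRing.Theory Num.Theory.
Local Open Scope ring_scope.

Section Reciprocal.
Variables (R : realType) (n : nat).

(* A reciprocal recommendation task: mutual preferences mu (used only for
   i <> j) and exposure weights v indexed by positions k in [n-1]. *)
Definition valid_task (mu : 'I_n -> 'I_n -> R) (v : 'I_n.-1 -> R) : Prop :=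
  (forall i j : 'I_n, i != j -> mu i j = mu j i) /\
  (forall i j : 'I_n, i != j -> 0 <= mu i j) /\
  (forall k l : 'I_n.-1, (k <= l)%N -> v l <= v k) /\
  (forall k : 'I_n.-1, 0 <= v k).

(* Ranking tensor: P i j k is defined for j <> i; for each i the matrix
   (P i j k)_{j <> i, k} is doubly stochastic.  Entries with j = i are unused. *)
Definition ranking_tensor (P : 'I_n -> 'I_n -> 'I_n.-1 -> R) : Prop :=
  forall i : 'I_n,
    (forall j k, j != i -> 0 <= P i j k) /\
    (forall j, j != i -> \sum_(k < n.-1) P i j k = 1) /\
    (forall k, \sum_(j < n | j != i) P i j k = 1).

Definition expo (P : 'I_n -> 'I_n -> 'I_n.-1 -> R) (v : 'I_n.-1 -> R) i j : R :=
  \sum_(k < n.-1) P i j k * v k.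

Definition utility mu v (P : 'I_n -> 'I_n -> 'I_n.-1 -> R) (i : 'I_n) : R :=
  \sum_(j < n | j != i) mu i j * expo P v i j
  + \sum_(j < n | j != i) mu i j * expo P v j i.

Definition in_U mu v (u : 'I_n -> R) : Prop :=
  exists P, ranking_tensor P /\ forall i, u i = utility mu v P i.

Definition psi (x alpha : R) : \bar R :=
  if 0 < alpha then (x `^ alpha)%:E
  else if 0 < x then
    (if alpha == 0 then (ln x)%:E else (- x `^ alpha)%:E)
  else -oo%E.

Definition W (alpha : R) (u : 'I_n -> R) : \bar R :=
  (\sum_(i < n) psi (u i) alpha)%E.

Definition W_maximizer mu v alpha (u : 'I_n -> R) : Prop :=
  in_U mu v u /\ forall u', in_U mu v u' -> (W alpha u' <= W alpha u)%E.

Definition Dvar (u : 'I_n -> R) : R :=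
  n%:R^-1 * \sum_(j < n) (u j - n%:R^-1 * \sum_(j' < n) u j') ^+ 2.

Definition Feq (beta : R) (u : 'I_n -> R) : R :=
  \sum_(i < n) u i - beta * Num.sqrt (Dvar u).

Definition in_Ueq mu v beta (u : 'I_n -> R) : Prop :=
  in_U mu v u /\ forall u', in_U mu v u' -> Feq beta u' <= Feq beta u.

End Reciprocal.

From HB Require Import structures.
From mathcomp Require Import all_boot all_order all_algebra all_fingroup.
From mathcomp Require Import all_classical all_reals all_analysis.
From mathcomp Require Import ring lra.
Set Implicit Arguments. Unset Strict Implicit. Unset Printing Implicit Defensive.
Import Order.TTheory GRing.Theory Num.Theory.
Import numFieldNormedType.Exports.
Local Open Scope classical_set_scope.
Local Open Scope ring_scope.

(* Split the users into the pair {0, 1} and the rest, let preferences be 1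
   across the two sides and 0 within a side, and give exposure only to the top
   position.  Every unit of exposure then counts once for a user on each side,
   so both sides have the same total utility: the two users of the small side
   hold half of it and lie far above the mean.  Hence the standard deviation is
   at least a fixed multiple of the total utility, and for large beta the
   equality objective is maximized only by the zero vector, which is achieved
   when everybody ranks a user of its own side first.  On the other hand a
   W_alpha maximizer with alpha < 1 is strictly positive: some ranking gives
   every user utility at least 1, and mixing a little of it into a vector with a
   zero coordinate raises the welfare (from -oo when alpha <= 0, by the infinite
   slope of x ^ alpha at 0 otherwise). *)

Section RankingTensors.
Variables (R : realType) (n : nat).
Implicit Types (P Q : 'I_n -> 'I_n -> 'I_n.-1 -> R) (mu : 'I_n -> 'I_n -> R).
Implicit Types (v : 'I_n.-1 -> R) (u w : 'I_n -> R) (t : R).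

(* User [i] puts [lift i (g i k)] at position [k]: the permutation [g i] orders
   the other users, enumerated through [lift i]. *)
Definition perm_tensor (g : 'I_n -> {perm 'I_n.-1}) : 'I_n -> 'I_n -> 'I_n.-1 -> R :=
  fun i j k => (j == lift i (g i k))%:R.

Lemma perm_tensor_ranking g : ranking_tensor (perm_tensor g).
Proof.
move=> i; split; [|split].
- by move=> j k _; rewrite ler0n.
- move=> j ji; case: (unliftP i j) => [j' ->|eq_ji]; last by rewrite eq_ji eqxx in ji.
  rewrite /perm_tensor (reindex_inj (@perm_inj _ (g i)^-1)) /=.
  under eq_bigr do rewrite permKV (inj_eq lift_inj) eq_sym.
  by rewrite (bigD1 j') //= eqxx big1 ?addr0 // => k /negbTE ->.
- move=> k; rewrite /perm_tensor (bigD1 (lift i (g i k))) /=; last by rewrite eq_sym neq_lift.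
  by rewrite eqxx big1 ?addr0 // => j /andP[_ /negbTE ->].
Qed.

Definition mix_tensor t P Q : 'I_n -> 'I_n -> 'I_n.-1 -> R :=
  fun i j k => (1 - t) * P i j k + t * Q i j k.

Lemma mix_tensor_ranking t P Q : 0 <= t <= 1 ->
  ranking_tensor P -> ranking_tensor Q -> ranking_tensor (mix_tensor t P Q).
Proof.
move=> /andP[t0 t1] HP HQ i; have [P0 [P1 P1']] := HP i; have [Q0 [Q1 Q1']] := HQ i.
split; [|split].
- by move=> j k ji; rewrite addr_ge0 // mulr_ge0 ?subr_ge0 ?P0 ?Q0.
- by move=> j ji; rewrite big_split /= -!mulr_sumr P1 // Q1 // !mulr1 subrK.
- by move=> k; rewrite big_split /= -!mulr_sumr P1' Q1' !mulr1 subrK.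
Qed.

Lemma utility_mix mu v t P Q i :
  utility mu v (mix_tensor t P Q) i = (1 - t) * utility mu v P i + t * utility mu v Q i.
Proof.
have expo_mix a b : expo (mix_tensor t P Q) v a b = (1 - t) * expo P v a b + t * expo Q v a b.
  by rewrite /expo !mulr_sumr -big_split; apply: eq_bigr => k _; rewrite /mix_tensor /=; ring.
have mix_sum (F G : 'I_n -> R) :
    \sum_(j < n | j != i) mu i j * ((1 - t) * F j + t * G j) =
    (1 - t) * \sum_(j < n | j != i) mu i j * F j + t * \sum_(j < n | j != i) mu i j * G j.
  by rewrite !mulr_sumr -big_split; apply: eq_bigr => j _ /=; ring.
rewrite /utility.
under eq_bigr => j _ do rewrite expo_mix.
under [X in _ + X]eq_bigr => j _ do rewrite expo_mix.
rewrite !mix_sum; ring.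
Qed.

Lemma in_U_utility mu v P : ranking_tensor P -> in_U mu v (utility mu v P).
Proof. by exists P. Qed.

Lemma in_U_mix mu v t u w : 0 <= t <= 1 -> in_U mu v u -> in_U mu v w ->
  in_U mu v (fun i => (1 - t) * u i + t * w i).
Proof.
move=> t01 [P [HP Hu]] [Q [HQ Hw]]; exists (mix_tensor t P Q).
by split=> [|i]; [exact: mix_tensor_ranking | rewrite utility_mix Hu Hw].
Qed.

Lemma utility_ge0 mu v P i : valid_task mu v -> ranking_tensor P -> 0 <= utility mu v P i.
Proof.
move=> [_ [mu0 [_ v0]]] HP.
have expo_ge0 a b : b != a -> 0 <= expo P v a b.
  by move=> ba; rewrite sumr_ge0 // => k _; rewrite mulr_ge0 ?v0 //; case: (HP a) => + _; apply.
by rewrite addr_ge0 // sumr_ge0 // => j ji; rewrite mulr_ge0 ?mu0 ?expo_ge0 // eq_sym.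
Qed.

Lemma in_U_ge0 mu v u i : valid_task mu v -> in_U mu v u -> 0 <= u i.
Proof. by move=> task [P [HP ->]]; apply: utility_ge0. Qed.

End RankingTensors.

Section PowerMix.
Variable R : realType.

Lemma exists_powR_dominates (alpha S c : R) : 0 < alpha < 1 -> 0 <= S -> 0 < c ->
  exists2 t, 0 <= t <= 1 & t * S < c * t `^ alpha.
Proof.
move=> /andP[a0 a1] S0 c0.
pose d := c / (S + c); pose t := d `^ (1 - alpha)^-1.
have d0 : 0 < d by rewrite divr_gt0 // ltr_wpDl.
have d1 : d <= 1 by rewrite ler_pdivrMr ?ltr_wpDl // mul1r lerDr.
have t_split : t = t `^ alpha * d.
  have -> : d = t `^ (1 - alpha) by rewrite -powRrM mulVf ?powRr1 ?subr_eq0 ?gt_eqF // ltW.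
  by rewrite -powRD addrC subrK ?oner_eq0 // powRr1 // powR_ge0.
have dS : d * S < c.
  by rewrite /d mulrAC ltr_pdivrMr ?ltr_wpDl // mulrDr ltrDl mulr_gt0.
exists t; last by rewrite {1}t_split -mulrA [c * _]mulrC ltr_pM2l // !powR_gt0.
rewrite powR_ge0 /= /t -[X in _ <= X](powRr0 d).
by apply: ger_powR; rewrite ?d0 ?d1 ?invr_ge0 ?subr_ge0 ?ltW.
Qed.

Lemma powR_mix_ge (alpha a b t : R) : 0 < alpha <= 1 -> 0 <= a -> 0 <= b -> 0 <= t <= 1 ->
  (1 - t) * a `^ alpha <= ((1 - t) * a + t * b) `^ alpha.
Proof.
move=> /andP[a0 a1] ha hb /andP[t0 t1]; have t1' : 0 <= 1 - t by rewrite subr_ge0.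
apply: (@le_trans _ _ (((1 - t) * a) `^ alpha)).
  rewrite powRM // ler_wpM2r ?powR_ge0 //.
  have [->|tlt1] := eqVneq t 1; first by rewrite subrr powR0 ?gt_eqF.
  apply: ger1_powR a1; apply/andP; split; last lra.
  by rewrite subr_gt0 lt_neqAle tlt1 t1.
have ta0 : 0 <= (1 - t) * a by rewrite mulr_ge0.
have tb0 : 0 <= t * b by rewrite mulr_ge0.
by apply: ge0_ler_powR; rewrite ?nnegrE ?addr_ge0 ?lerDl // ltW.
Qed.

Lemma sum_powR_mix_gt (n : nat) (alpha : R) (u w : 'I_n -> R) (z : 'I_n) :
  0 < alpha < 1 -> (forall i, 0 <= u i) -> (forall i, 0 < w i) -> u z = 0 ->
  exists2 t, 0 <= t <= 1 &
    \sum_i u i `^ alpha < \sum_i ((1 - t) * u i + t * w i) `^ alpha.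
Proof.
move=> /andP[a0 a1] u0 w0 uz0.
pose S := \sum_i u i `^ alpha.
have S0 : 0 <= S by rewrite sumr_ge0 // => i _; apply: powR_ge0.
have [t /andP[t0 t1] tS] := @exists_powR_dominates alpha S (w z `^ alpha)
  (introT andP (conj a0 a1)) S0 (powR_gt0 _ (w0 z)).
exists t; first by rewrite t0.
have Sz : S = \sum_(i | i != z) u i `^ alpha.
  by rewrite /S (bigD1 z) //= uz0 powR0 ?gt_eqF // add0r.
rewrite -/S (bigD1 z) //= uz0 mulr0 add0r powRM // ?(ltW (w0 z)) // mulrC.
apply: (@lt_le_trans _ _ (w z `^ alpha * t `^ alpha + (1 - t) * S)).
  rewrite mulrBl mul1r; lra.
rewrite lerD2l Sz mulr_sumr ler_sum // => i _.
by apply: powR_mix_ge; rewrite ?a0 ?t0 ?t1 ?(ltW a1) ?u0 ?(ltW (w0 i)).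
Qed.

End PowerMix.

Section Welfare.
Variables (R : realType) (n : nat).
Implicit Types (u : 'I_n -> R) (alpha : R).

Lemma W_gt0 alpha u : 0 < alpha -> W alpha u = (\sum_i u i `^ alpha)%:E.
Proof. by move=> a0; rewrite /W -sumEFin; apply: eq_bigr => i _; rewrite /psi a0. Qed.

Lemma W_le0 alpha u : alpha <= 0 -> (forall i, 0 < u i) ->
  W alpha u = (\sum_i (if alpha == 0 then ln (u i) else - u i `^ alpha))%:E.
Proof.
move=> a0 u0; rewrite /W -sumEFin; apply: eq_bigr => i _.
by rewrite /psi ltNge a0 /= u0; case: ifP.
Qed.

Lemma W_le0_Ny alpha u z : alpha <= 0 -> u z <= 0 -> W alpha u = -oo%E.
Proof.
by move=> a0 uz; rewrite /W (bigD1 z) //= {1}/psi ltNge a0 /= ltNge uz /= addNye.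
Qed.

End Welfare.

Section MaximizerPositive.
Variables (R : realType) (n : nat) (mu : 'I_n -> 'I_n -> R) (v : 'I_n.-1 -> R).
Hypothesis task : valid_task mu v.
Variable w : 'I_n -> R.
Hypotheses (Uw : in_U mu v w) (w_gt0 : forall i, 0 < w i).

Lemma W_maximizer_gt0 alpha ua : alpha < 1 -> W_maximizer mu v alpha ua ->
  forall i, 0 < ua i.
Proof.
move=> a1 [Uua ua_max] z; have ua_ge0 i : 0 <= ua i by apply: in_U_ge0 task Uua.
rewrite lt_neqAle ua_ge0 andbT eq_sym; apply/negP => /eqP uz0.
have [a_le0|a_gt0] := leP alpha 0.
  have uz_le0 : ua z <= 0 by rewrite uz0.
  have := ua_max w Uw; rewrite (W_le0_Ny a_le0 uz_le0) (W_le0 a_le0 w_gt0).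
  by rewrite leeNy_eq.
have [t t01] := sum_powR_mix_gt (introT andP (conj a_gt0 a1)) ua_ge0 w_gt0 uz0.
apply/negP; rewrite -leNgt.
by have := ua_max _ (in_U_mix t01 Uua Uw); rewrite !W_gt0 // lee_fin.
Qed.

End MaximizerPositive.

Section Equality.
Variables (R : realType) (n : nat).
Implicit Types (u : 'I_n -> R).

Definition mean u : R := n%:R^-1 * \sum_k u k.

Lemma Dvar_ge0 u : 0 <= Dvar u.
Proof. by rewrite mulr_ge0 ?invr_ge0 // sumr_ge0 // => j _; apply: sqr_ge0. Qed.

Lemma Dvar_ge_pair u (i j : 'I_n) : i != j ->
  (u i - mean u) ^+ 2 + (u j - mean u) ^+ 2 <= n%:R * Dvar u.
Proof.
move=> ij; have n0 : n%:R != 0 :> R.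
  by rewrite pnatr_eq0 -lt0n (leq_ltn_trans (leq0n i) (ltn_ord i)).
rewrite /Dvar mulVKf // -/(mean u) (bigD1 i) //= (bigD1 j) 1?eq_sym //= addrA lerDl.
by rewrite sumr_ge0 // => k _; apply: sqr_ge0.
Qed.

Lemma Feq0 (beta : R) : Feq beta (fun _ : 'I_n => 0) = 0.
Proof.
by rewrite /Feq /Dvar big1_eq sub0r mulr0 subr0 expr0n /= big1_eq mulr0 sqrtr0 mulr0 oppr0.
Qed.

Lemma Feq_ge0_sqr beta u : 0 <= beta -> 0 <= Feq beta u ->
  beta ^+ 2 * Dvar u <= (\sum_i u i) ^+ 2.
Proof.
move=> b0; rewrite subr_ge0 => bq.
have bq0 : 0 <= beta * Num.sqrt (Dvar u) by rewrite mulr_ge0 ?sqrtr_ge0.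
by rewrite -[Dvar u]sqr_sqrtr ?Dvar_ge0 // -exprMn ler_sqr // nnegrE (le_trans bq0).
Qed.

End Equality.

Section TwoSidedTask.
Variables (R : realType) (k : nat).
Local Notation N := k.+4.+1.

Definition side (i : 'I_N) : bool := (i < 2)%N.
Definition cross_mu (i j : 'I_N) : R := (side i != side j)%:R.
Definition top_weight (x : 'I_N.-1) : R := (x == 0 :> nat)%:R.

Lemma valid_cross_task : valid_task cross_mu top_weight.
Proof.
split; [|split; [|split]].
- by move=> i j _; rewrite /cross_mu eq_sym.
- by move=> i j _; rewrite ler0n.
- move=> x y; rewrite /top_weight; case: (y : nat) => [|y'] /=; last by rewrite ler0n.
  by rewrite leqn0 => /eqP ->.
- by move=> x; rewrite ler0n.
Qed.

Definition top (g : 'I_N -> {perm 'I_N.-1}) (i : 'I_N) : 'I_N := lift i (g i ord0).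

Lemma utility_perm_tensor g i :
  utility cross_mu top_weight (perm_tensor R g) i =
  \sum_(j < N | side j != side i) ((j == top g i)%:R + (i == top g j)%:R).
Proof.
have expo_top a b : expo (perm_tensor R g) top_weight a b = (b == top g a)%:R.
  rewrite /expo (bigD1 ord0) //= /top_weight eqxx mulr1 big1 ?addr0 // => x.
  by rewrite -val_eqE /= => /negbTE ->; rewrite mulr0.
rewrite /utility -big_split /= big_mkcond [RHS]big_mkcond; apply: eq_bigr => j _.
rewrite !expo_top /cross_mu; case: (eqVneq j i) => [->|_] /=; first by rewrite eqxx.
by rewrite eq_sym; case: (side j != side i); rewrite ?mul1r ?mul0r ?addr0.
Qed.

(* Users 0 and 1 rank each other first, every other user ranks user 2 or 3 first. *)
Definition same_side_perm (i : 'I_N) : {perm 'I_N.-1} :=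
  tperm ord0 (if side i then ord0 else Ordinal (isT : (2 < k.+4)%N)).

Lemma side_top_same_side i : side (top same_side_perm i) = side i.
Proof.
rewrite /top /same_side_perm tpermL /side /=.
by case: ifP; rewrite /bump; case: (i : nat) => [|[|[|m]]].
Qed.

Lemma in_U_zero : in_U cross_mu top_weight (fun=> 0).
Proof.
exists (perm_tensor R same_side_perm); split=> [|i]; first exact: perm_tensor_ranking.
rewrite utility_perm_tensor big1 // => j ji.
have /negbTE -> : j != top same_side_perm i.
  by apply: contraNneq ji => ->; rewrite side_top_same_side.
have /negbTE -> : i != top same_side_perm j.
  by apply: contraNneq ji => ->; rewrite side_top_same_side.
by rewrite addr0.
Qed.

(* User 0 ranks user 1 first, user 1 ranks user 2 first, all others rank user 0 first. *)
Definition cross_perm (i : 'I_N) : {perm 'I_N.-1} :=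
  tperm ord0 (if i == 1 :> nat then Ordinal (isT : (1 < k.+4)%N) else ord0).

Lemma utility_cross_perm_ge1 i :
  1 <= utility cross_mu top_weight (perm_tensor R cross_perm) i.
Proof.
have [j ji hj] : exists2 j, side j != side i &
    (j == top cross_perm i) || (i == top cross_perm j).
  have [i0 | i_neq0] := eqVneq (i : nat) 0.
    exists (Ordinal (isT : (2 < N)%N)); first by rewrite /side i0.
    by apply/orP; right; rewrite -val_eqE /top /cross_perm tpermL /= i0.
  exists (top cross_perm i); last by rewrite eqxx.
  rewrite /top /cross_perm tpermL /side.
  by move: i_neq0; case: ifP => /eqP; rewrite /= /bump; case: (i : nat) => [|[|[|m]]] //=.
rewrite utility_perm_tensor (bigD1 j) //=; apply: ler_wpDr; first by rewrite sumr_ge0.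
by case: (j == _) (i == _) hj => [] [] //= _; lra.
Qed.

Lemma in_U_balance u : in_U cross_mu top_weight u ->
  \sum_(i | side i) u i = \sum_(i | ~~ side i) u i.
Proof.
move=> [P [_ Hu]]; rewrite !(eq_bigr _ (fun i _ => Hu i)); set e := expo P top_weight.
have cross_utility i :
    utility cross_mu top_weight P i = \sum_(j | side j != side i) (e i j + e j i).
  rewrite /utility -big_split /= big_mkcond [RHS]big_mkcond; apply: eq_bigr => j _.
  rewrite /cross_mu; case: (eqVneq j i) => [->|_] /=; first by rewrite eqxx.
  by rewrite eq_sym; case: (side j != side i); rewrite ?mul1r ?mul0r ?addr0.
rewrite (eq_bigr (fun i => \sum_(j | ~~ side j) (e i j + e j i))) => [|i side_i].
  rewrite [RHS](eq_bigr (fun i => \sum_(j | side j) (e i j + e j i))) => [|i /negbTE side_i].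
    by rewrite [RHS]exchange_big; apply: eq_bigr => i _; apply: eq_bigr => j _; rewrite addrC.
  by rewrite cross_utility; apply: eq_bigl => j; rewrite side_i eqbF_neg negbK.
by rewrite cross_utility; apply: eq_bigl => j; rewrite side_i eqb_id.
Qed.

Lemma in_U_sum u : in_U cross_mu top_weight u ->
  \sum_i u i = 2 * (u ord0 + u (lift ord0 ord0)).
Proof.
move=> Uu; have side_sum : \sum_(i | side i) u i = u ord0 + u (lift ord0 ord0).
  by rewrite big_mkcond !big_ord_recl /= big1 ?addr0.
by rewrite (bigID side) /= -in_U_balance // side_sum mulr2n mulrDl mul1r.
Qed.

Lemma in_U_sqr_le_Dvar u : in_U cross_mu top_weight u ->
  (u ord0 + u (lift ord0 ord0)) ^+ 2 <= 2 * N%:R ^+ 3 * Dvar u.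
Proof.
move=> Uu; have u0 i : 0 <= u i by apply: in_U_ge0 valid_cross_task Uu.
set a := u ord0; set b := u (lift ord0 ord0); set m := mean u; set Nr : R := N%:R.
have N5 : 5 <= Nr by rewrite /Nr ler_nat.
have Nm : Nr * m = 2 * (a + b) by rewrite /m /mean mulVKf ?in_U_sum // pnatr_eq0.
have pair : (a - m) ^+ 2 + (b - m) ^+ 2 <= Nr * Dvar u by apply: Dvar_ge_pair; exact: neq_lift.
have ab0 : 0 <= a + b := addr_ge0 (u0 _) (u0 _).
(* [N (a + b - 2 m) = (N - 4) (a + b)]: the small side lies far above the mean. *)
have ab_le : a + b <= Nr * (a + b - 2 * m) by nra.
have ab_sqr : (a + b) ^+ 2 <= Nr ^+ 2 * (a + b - 2 * m) ^+ 2.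
  by rewrite -exprMn ler_sqr ?nnegrE // (le_trans ab0).
have := sqr_ge0 (a - b); nra.
Qed.

Lemma Feq_ge0_in_U_eq0 beta u : in_U cross_mu top_weight u -> 8 * N%:R ^+ 3 < beta ->
  0 <= Feq beta u -> forall i, u i = 0.
Proof.
move=> Uu beta_big F0; have u0 i : 0 <= u i by apply: in_U_ge0 valid_cross_task Uu.
have c_ge1 : 1 <= 8 * N%:R ^+ 3 :> R by rewrite -natrX -natrM ler1n muln_gt0 expn_gt0.
have beta_gt1 : 1 < beta := le_lt_trans c_ge1 beta_big.
have := Feq_ge0_sqr (ltW (lt_trans ltr01 beta_gt1)) F0; rewrite in_U_sum //.
have := in_U_sqr_le_Dvar Uu; have := Dvar_ge0 u.
set s := u ord0 + u (lift ord0 ord0); set D := Dvar u => D0 s_le beta_le.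
have c_lt : 8 * N%:R ^+ 3 < beta ^+ 2 by nra.
have s0 : s = 0.
  apply/eqP; rewrite -sqrf_eq0 eq_le sqr_ge0 andbT; nra.
have sum0 : \sum_i u i = 0 by rewrite in_U_sum // -/s s0 mulr0.
by move=> i; apply: (psumr_eq0P (fun i _ => u0 i) sum0).
Qed.

End TwoSidedTask.

Theorem proposition3 (R : realType) (n : nat) (hn : (5 <= n)%N) :
  exists (mu : 'I_n -> 'I_n -> R) (v : 'I_n.-1 -> R),
    valid_task mu v /\
    forall (alpha : R), alpha < 1 ->
    forall (ua : 'I_n -> R), W_maximizer mu v alpha ua ->
    forall (ueq : R -> 'I_n -> R),
      (forall beta, 0 < beta -> in_Ueq mu v beta (ueq beta)) ->
      (exists beta, 0 < beta /\ forall i, ueq beta i < ua i) /\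
      ((\sum_(i < n) ueq beta i) @[beta --> +oo] --> 0).
Proof.
case: n hn => [|[|[|[|[|k]]]]] // _.
exists (@cross_mu R k), (@top_weight R k); split; first exact: valid_cross_task.
move=> alpha a1 ua ua_max ueq ueq_opt.
have ua_gt0 := W_maximizer_gt0 (valid_cross_task R k)
  (in_U_utility _ _ (perm_tensor_ranking R (@cross_perm k)))
  (fun i => lt_le_trans ltr01 (utility_cross_perm_ge1 R i)) a1 ua_max.
pose B : R := 8 * (k.+4.+1)%:R ^+ 3 + 1.
have B_gt0 : 0 < B by rewrite ltr_wpDl // mulr_ge0 // exprn_ge0.
have ueq0 beta : B <= beta -> forall i, ueq beta i = 0.
  move=> B_le; have [Uu u_max] := ueq_opt beta (lt_le_trans B_gt0 B_le).
  apply: Feq_ge0_in_U_eq0 Uu _ _; first by apply: lt_le_trans B_le; rewrite /B ltrDl.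
  by have := u_max _ (in_U_zero R k); rewrite Feq0.
split; first by exists B; split => // i; rewrite ueq0.
apply: cvg_near_cst; exists B; split; first exact: num_real.
by move=> beta /ltW B_le; rewrite big1 // => i _; apply: ueq0.
Qed.
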